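(* Let $n\ge1$, let $A\in\mathbb{C}^{2n\times 2n}$ be Hamiltonian, and let $f$ and $\operatorname{grad} f$ be as in the context. Then for every unitary symplectic $Z\in\mathbb{C}^{2n\times 2n}$ there exist a symplectic rotation $R(i,j,\phi,\alpha)$ of one of the three types (R1), (R2), (R3) (with admissible pivot pair $(i,j)$ for that type) and an angle $\alpha$ such that $$\big|\langle \operatorname{grad} f(Z),\, Z\dot R(i,j,0,\alpha)\rangle_{\mathbb{R}}\big|\ \ge\ \eta\,\|\operatorname{grad} f(Z)\|_F,\qquad \eta=\frac{2}{\sqrt{4n^2-2n}},$$ where $\dot R(i,j,0,\alpha)=\frac{\partial}{\partial\phi}R(i,j,\phi,\alpha)\big|_{\phi=0}$.
   Context: $J=J_{2n}=\begin{bmatrix}0&I_n\\-I_n&0\end{bmatrix}$; $A$ is Hamiltonian if $(JA)^H=JA$; $Z$ is symplectic if $Z^HJZ=J$. $f(Z)=\|\operatorname{diag}(Z^HAZ)\|_F^2=\sum_{j}|\langle AZe_j,Ze_j\rangle|^2$ on the manifold $\mathcal{M}$ of unitary symplectic matrices; $\langle X,Y\rangle_{\mathbb{R}}=\operatorname{Re}\operatorname{tr}(X^HY)$; $\operatorname{grad} f(Z)$ is the orthogonal projection of the Euclidean gradient $\big[\partial\tilde f/\partial\operatorname{Re}z_{jk}+\imath\,\partial\tilde f/\partial\operatorname{Im}z_{jk}\big]$ of $\tilde f(Z)=\sum_j|\langle AZe_j,Ze_j\rangle|^2$ onto $T_Z\mathcal{M}=\{ZK: K\text{ skew-Hermitian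 Hamiltonian}\}$. Write $c=\cos\phi$, $s=e^{\imath\alpha}\sin\phi$. All rotations equal $I_{2n}$ except in the listed entries: (R1) for $1\le i\le n$, $j=n+i$ (and $\alpha=0$): $R_{ii}=R_{n+i,n+i}=\cos\phi$, $R_{i,n+i}=-\sin\phi$, $R_{n+i,i}=\sin\phi$. (R2) for $1\le i<j\le n$: $R_{ii}=R_{jj}=R_{n+i,n+i}=R_{n+j,n+j}=c$, $R_{ij}=R_{n+i,n+j}=-s$, $R_{ji}=R_{n+j,n+i}=\bar s$. (R3) for $1\le i\le n$, $n+i<j\le 2n$ (so $i<j-n\le n$): $R_{ii}=R_{j-n,j-n}=R_{n+i,n+i}=R_{jj}=c$, $R_{ij}=-s$, $R_{j-n,n+i}=-\bar s$, $R_{n+i,j-n}=s$, $R_{ji}=\bar s$. Each such $R(i,j,\phi,\alpha)$ is unitary symplectic. *)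

(* complex numbers are modelled by algC (numClosedFieldType). *)
From HB Require Import structures.
From mathcomp Require Import all_boot all_order all_algebra all_field.
Set Implicit Arguments. Unset Strict Implicit. Unset Printing Implicit Defensive.
Import Order.TTheory GRing.Theory Num.Theory.
Local Open Scope ring_scope.

Definition mxH (m k : nat) (X : 'M[algC]_(m, k)) : 'M[algC]_(k, m) :=
  (map_mx (@Num.conj _) X)^T.

Definition Jmx (n : nat) : 'M[algC]_(n + n) := block_mx 0 1%:M (- 1%:M) 0.

Definition hamiltonian (n : nat) (A : 'M[algC]_(n + n)) : Prop :=
  mxH (Jmx n *m A) = Jmx n *m A.

Definition symplectic (n : nat) (Z : 'M[algC]_(n + n)) : Prop :=
  mxH Z *m Jmx n *m Z = Jmx n.

Definition unitary (n : nat) (Z : 'M[algC]_(n + n)) : Prop :=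
  mxH Z *m Z = 1%:M.

Definition unitary_symplectic n (Z : 'M[algC]_(n + n)) : Prop :=
  unitary Z /\ symplectic Z.

Definition skew_hermitian_hamiltonian n (K : 'M[algC]_(n + n)) : Prop :=
  mxH K = - K /\ hamiltonian K.

Definition rinner (m k : nat) (X Y : 'M[algC]_(m, k)) : algC :=
  'Re (\tr (mxH X *m Y)).

Definition frob (m k : nat) (X : 'M[algC]_(m, k)) : algC :=
  sqrtC (\sum_(i < m) \sum_(j < k) `|X i j| ^+ 2).

(* f~(Z) = sum_j |<A Z e_j, Z e_j>|^2 = sum_j |(Z^H A Z)_jj|^2 *)
Definition ftilde n (A : 'M[algC]_(n + n)) (Z : 'M[algC]_(n + n)) : algC :=
  \sum_(j < n + n) `|(mxH Z *m A *m Z) j j| ^+ 2.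

(* F is polynomial in the entries and their conjugates, so along a real line it
   agrees with a polynomial p; the derivative at 0 is p'(0). *)
Definition is_dir_deriv n (F : 'M[algC]_(n + n) -> algC)
    (Z X : 'M[algC]_(n + n)) (v : algC) : Prop :=
  exists p : {poly algC},
    (forall t : algC, t \is Num.real -> F (Z + t *: X) = p.[t]) /\
    (p^`()).[0] = v.

Definition is_egrad n (F : 'M[algC]_(n + n) -> algC)
    (Z G : 'M[algC]_(n + n)) : Prop :=
  forall j k : 'I_(n + n), exists a b : algC,
    is_dir_deriv F Z (delta_mx j k) a /\
    is_dir_deriv F Z ('i *: delta_mx j k) b /\
    G j k = a + 'i * b.

Definition in_tangent n (Z P : 'M[algC]_(n + n)) : Prop :=
  exists K, skew_hermitian_hamiltonian K /\ P = Z *m K.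

Definition is_tangent_proj n (Z G P : 'M[algC]_(n + n)) : Prop :=
  in_tangent Z P /\
  forall Q, in_tangent Z Q -> rinner (G - P) Q = 0.

(* Rotation kinds, with 0-based indices; pivot pairs:
   RK1 i   : (i, n+i)                      [type (R1)]
   RK2 i j : (i, j), requires i < j         [type (R2)]
   RK3 i j : (i, n+j), requires i < j       [type (R3), j here = paper's j-n] *)
Inductive rot_kind (n : nat) :=
  | RK1 of 'I_n
  | RK2 of 'I_n & 'I_n
  | RK3 of 'I_n & 'I_n.

Definition admissible n (rk : rot_kind n) : bool :=
  match rk with
  | RK1 _ => true
  | RK2 i j => (i < j)%N
  | RK3 i j => (i < j)%N
  end.

Definition at_ (r k a b : nat) : bool := (r == a) && (k == b).

(* Generic pattern: entries listed in (R1)/(R2)/(R3) get c / -s / s / conj s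
   etc., remaining diagonal entries get d, everything else 0.
   The rotation is R(i,j,phi,alpha) = rot_pattern rk 1 (cos phi) (e^{i alpha} sin phi). *)
Definition rot_pattern n (rk : rot_kind n) (d c s : algC) : 'M[algC]_(n + n) :=
  \matrix_(r, k)
   let r := (r : nat) in let k := (k : nat) in
   match rk with
   | RK1 i =>
     let p := (i : nat) in let q := (n + i)%N in
     if at_ r k p p || at_ r k q q then c
     else if at_ r k p q then - s
     else if at_ r k q p then s
     else if r == k then d else 0
   | RK2 i j =>
     let p := (i : nat) in let q := (j : nat) in
     let p' := (n + i)%N in let q' := (n + j)%N in
     if [|| at_ r k p p, at_ r k q q, at_ r k p' p' | at_ r k q' q'] then c
     else if at_ r k p q || at_ r k p' q' then - s
     else if at_ r k q p || at_ r k q' p' then s^*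
     else if r == k then d else 0
   | RK3 i j =>
     let p := (i : nat) in let q := (j : nat) in
     let p' := (n + i)%N in let q' := (n + j)%N in
     if [|| at_ r k p p, at_ r k q q, at_ r k p' p' | at_ r k q' q'] then c
     else if at_ r k p q' then - s
     else if at_ r k q p' then - s^*
     else if at_ r k p' q then s
     else if at_ r k q' p then s^*
     else if r == k then d else 0
   end.

(* The symplectic rotation with c = cos phi, s = e^{i alpha} sin phi. *)
Definition symp_rot n (rk : rot_kind n) (c s : algC) : 'M[algC]_(n + n) :=
  rot_pattern rk 1 c s.

(* d/dphi R(i,j,phi,alpha) at phi = 0, with u = e^{i alpha}:
   since the pattern is linear in (d,c,s), and d(1)/dphi = 0, d(cos)/dphi(0) = 0,
   d(u sin)/dphi(0) = u, the derivative is rot_pattern rk 0 0 u. *)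
Definition rot_dot n (rk : rot_kind n) (u : algC) : 'M[algC]_(n + n) :=
  rot_pattern rk 0 0 u.

Definition eta_const (n : nat) : algC :=
  2 / sqrtC (4 * n%:R ^+ 2 - 2 * n%:R).

From HB Require Import structures.
From mathcomp Require Import all_boot all_order all_algebra all_field zify ring.
Import Order.TTheory GRing.Theory Num.Theory.
Set Implicit Arguments. Unset Strict Implicit. Unset Printing Implicit Defensive.
Local Open Scope ring_scope.

(* Write P = Z K with K skew-Hermitian Hamiltonian.  The function f is invariant
   under Z |-> Z diag(e^{i theta}), so its gradient is orthogonal to every Z D with
   D diagonal and imaginary; since P is the projection of the gradient, taking
   D = diag K gives sum_r |K_rr|^2 = 0.  Hence ||P||_F = ||K||_F is at most
   sqrt(2n(2n-1)) max |K_ab|.  On the other hand <P, Z R'> = Re tr(K^H R'), and the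
   rotation pivoting at a largest entry K_ab, with its phase aligned to K_ab, makes
   this at least 2 |K_ab| in absolute value.  Finally eta sqrt(2n(2n-1)) = 2. *)

Section MatrixUnits.
Variable R : pzRingType.

Lemma mul_delta_mxE m k l (a : 'I_m) (b : 'I_k) (B : 'M[R]_(k, l)) r c :
  (delta_mx a b *m B) r c = (r == a)%:R * B b c.
Proof.
rewrite mxE (bigD1 b) //= big1 ?addr0 => [|i /negbTE ne]; rewrite mxE.
  by rewrite eqxx andbT.
by rewrite ne andbF mul0r.
Qed.

Lemma mulmx_deltaE m k l (B : 'M[R]_(m, k)) (a : 'I_k) (b : 'I_l) r c :
  (B *m delta_mx a b) r c = B r a * (c == b)%:R.
Proof.
rewrite mxE (bigD1 a) //= big1 ?addr0 => [|i /negbTE ne]; rewrite mxE.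
  by rewrite eqxx.
by rewrite ne mulr0.
Qed.

Lemma mxtrace_mulmx_delta m (Y : 'M[R]_m) (a b : 'I_m) :
  \tr (Y *m delta_mx a b) = Y b a.
Proof.
rewrite /mxtrace (bigD1 b) //= big1 ?addr0 => [|i /negbTE ne];
  by rewrite mulmx_deltaE ?eqxx ?mulr1 ?ne ?mulr0.
Qed.

Lemma mxtrace_mulmx_diag m (Y : 'M[R]_m) (d : 'rV_m) :
  \tr (Y *m diag_mx d) = \sum_r Y r r * d 0 r.
Proof. by rewrite mul_mx_diag /mxtrace; apply: eq_bigr => r _; rewrite mxE. Qed.

End MatrixUnits.

Lemma mxHE m k (X : 'M[algC]_(m, k)) a b : mxH X a b = (X b a)^*.
Proof. by rewrite !mxE. Qed.

Lemma mxHM m k l (X : 'M[algC]_(m, k)) (Y : 'M[algC]_(k, l)) :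
  mxH (X *m Y) = mxH Y *m mxH X.
Proof. by rewrite /mxH map_mxM trmx_mul. Qed.

Lemma mxHK m k (X : 'M[algC]_(m, k)) : mxH (mxH X) = X.
Proof. by apply/matrixP => a b; rewrite !mxHE conjCK. Qed.

Lemma mxHD m k (X Y : 'M[algC]_(m, k)) : mxH (X + Y) = mxH X + mxH Y.
Proof. by rewrite /mxH map_mxD linearD. Qed.

Lemma mxHB m k (X Y : 'M[algC]_(m, k)) : mxH (X - Y) = mxH X - mxH Y.
Proof. by rewrite /mxH map_mxB linearB. Qed.

Lemma mxHZ m k c (X : 'M[algC]_(m, k)) : mxH (c *: X) = c^* *: mxH X.
Proof. by rewrite /mxH map_mxZ linearZ. Qed.

Lemma mxH_delta m k (a : 'I_m) (b : 'I_k) : mxH (delta_mx a b) = delta_mx b a.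
Proof. by rewrite /mxH map_delta_mx trmx_delta. Qed.

Lemma rinnerBl m k (X Y W : 'M[algC]_(m, k)) :
  rinner (X - Y) W = rinner X W - rinner Y W.
Proof. by rewrite /rinner mxHB mulmxBl !raddfB. Qed.

Lemma rinner_mulmxl m k l (Z : 'M[algC]_(m, k)) (X Y : 'M[algC]_(k, l)) :
  mxH Z *m Z = 1%:M -> rinner (Z *m X) (Z *m Y) = rinner X Y.
Proof. by move=> hZ; rewrite /rinner mxHM -mulmxA (mulmxA (mxH Z)) hZ mul1mx. Qed.

Lemma frobE m k (X : 'M[algC]_(m, k)) : frob X = sqrtC (\tr (mxH X *m X)).
Proof.
rewrite /frob exchange_big; congr sqrtC; apply: eq_bigr => j _; rewrite mxE.
by apply: eq_bigr => i _; rewrite mxHE normCK mulrC.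
Qed.

Lemma frob_mulmxl m k l (Z : 'M[algC]_(m, k)) (X : 'M[algC]_(k, l)) :
  mxH Z *m Z = 1%:M -> frob (Z *m X) = frob X.
Proof. by move=> hZ; rewrite !frobE mxHM -mulmxA (mulmxA (mxH Z)) hZ mul1mx. Qed.

Section Hamiltonian.
Variable n : nat.
Implicit Types K : 'M[algC]_(n + n).

Lemma mulJmx_lshift K i c : (Jmx n *m K) (lshift n i) c = K (rshift n i) c.
Proof.
by rewrite /Jmx -{1}[K]vsubmxK mul_block_col !mul0mx mul1mx add0r col_mxEu mxE.
Qed.

Lemma mulJmx_rshift K i c : (Jmx n *m K) (rshift n i) c = - K (lshift n i) c.
Proof.
by rewrite /Jmx -{1}[K]vsubmxK mul_block_col !mul0mx addr0 col_mxEd mulNmx mul1mx !mxE.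
Qed.

Lemma skew_hermitian_hamiltonianP K :
  skew_hermitian_hamiltonian K <->
  [/\ forall a b, (K b a)^* = - K a b,
      forall i j, K (rshift n i) (rshift n j) = K (lshift n i) (lshift n j) &
      forall i j, K (rshift n i) (lshift n j) = - K (lshift n i) (rshift n j)].
Proof.
split.
  case=> hS; rewrite /hamiltonian => hH.
  have sk a b : (K b a)^* = - K a b.
    by have /matrixP/(_ a b) := hS; rewrite mxHE mxE.
  have /matrixP hm := hH.
  split=> // i j.
    by have := hm (lshift n i) (rshift n j); rewrite mxHE mulJmx_rshift
      mulJmx_lshift => <-; rewrite rmorphN /= sk opprK.
  by have := hm (lshift n i) (lshift n j); rewrite mxHE !mulJmx_lshift => <-.
case=> sk e1 e2; split; apply/matrixP => a b; rewrite mxHE; first by rewrite mxE sk.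
case: (split_ordP a) => i ->; case: (split_ordP b) => j ->.
all: by rewrite ?mulJmx_lshift ?mulJmx_rshift ?rmorphN /= sk ?e1 ?e2 ?opprK.
Qed.

End Hamiltonian.

Lemma poly_eq_on_real (R : numDomainType) (p q : {poly R}) :
  (forall t, t \is Num.real -> p.[t] = q.[t]) -> p = q.
Proof.
move=> hpq; apply/eqP; rewrite -subr_eq0; apply/negPn/negP => nz.
pose s : seq R := [seq i%:R | i <- iota 0 (size (p - q))].
have roots_s : all (root (p - q)) s.
  apply/allP => _ /mapP [i _ ->].
  by rewrite /root hornerD hornerN hpq ?realn // subrr.
have uniq_s : uniq s.
  by rewrite map_inj_uniq ?iota_uniq // => a b /eqP; rewrite eqr_nat => /eqP.
by have := max_poly_roots nz roots_s uniq_s; rewrite size_map size_iota ltnn.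
Qed.

Section Gradient.
Variables (n : nat) (A Z : 'M[algC]_(n + n)).
Local Notation M := (mxH Z *m A *m Z).

Lemma is_dir_deriv_ftilde X v : is_dir_deriv (ftilde A) Z X v ->
  let V := mxH X *m A *m Z + mxH Z *m A *m X in
  v = \sum_j (V j j * (M j j)^* + M j j * (V j j)^*).
Proof.
case=> p [hp <-] V; pose W := mxH X *m A *m X.
(* Along the real line Z + t X the j-th diagonal entry of Z^H A Z is P j, hence
   ftilde A is the polynomial \sum_j P j * conj (P j) there. *)
pose P j : {poly algC} := (M j j)%:P + V j j *: 'X + W j j *: 'X^2.
have P_line j t : t \is Num.real ->
    (mxH (Z + t *: X) *m A *m (Z + t *: X)) j j = (P j).[t].
  move=> /conj_Creal ct; rewrite !hornerD !hornerZ hornerC hornerX hornerXn.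
  rewrite mxHD mxHZ ct !mulmxDl !mulmxDr -!scalemxAl -!scalemxAr !mxE.
  ring.
have -> : p = \sum_j P j * map_poly (@Num.conj _) (P j).
  apply: poly_eq_on_real => t ht; rewrite -hp // /ftilde horner_sum.
  apply: eq_bigr => j _; rewrite P_line // hornerM normCK; congr (_ * _).
  by rewrite -[in RHS](conj_Creal ht) horner_map.
have horner_conj0 q : (map_poly (@Num.conj _) q).[0] = (q.[0])^*.
  by rewrite -{1}conjC0 horner_map.
have P0 j : (P j).[0] = M j j.
  by rewrite horner_coef0 !coefD coefC !coefZ coefX coefXn /= !mulr0 !addr0.
have P'0 j : (P j)^`().[0] = V j j.
  rewrite horner_coef0 coef_deriv !coefD coefC !coefZ coefX coefXn /=.
  by rewrite mulr1 mulr0 add0r addr0.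
rewrite raddf_sum horner_sum; apply: eq_bigr => j _.
by rewrite /= derivM deriv_map hornerD !hornerM !horner_conj0 P0 P'0.
Qed.

Lemma is_dir_deriv_ftilde_delta c j k v :
  is_dir_deriv (ftilde A) Z (c *: delta_mx j k) v ->
  let w := c^* * (A *m Z) j k + c * (mxH Z *m A) k j in
  v = w * (M k k)^* + M k k * w^*.
Proof.
move=> /is_dir_deriv_ftilde -> w.
set V := _ + _; have V_diag l : V l l = (l == k)%:R * w.
  rewrite /V mxHZ mxH_delta -!scalemxAl -scalemxAr -[delta_mx k j *m A *m Z]mulmxA.
  rewrite mxE [X in X + _]mxE [X in _ + X]mxE mul_delta_mxE mulmx_deltaE /w.
  by case: eqP => [->|_]; rewrite /= ?mul1r ?mulr1 ?mul0r ?mulr0 ?addr0.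
rewrite (bigD1 k) //= big1 ?addr0 => [|l /negbTE ne]; rewrite !V_diag ?eqxx ?ne.
  by rewrite !mul1r.
by rewrite !mul0r conjC0 mulr0 addr0.
Qed.

Lemma egradE G : is_egrad (ftilde A) Z G -> forall j k,
  G j k = 2 * ((A *m Z) j k * (M k k)^* + M k k * ((mxH Z *m A) k j)^*).
Proof.
move=> hG j k; have [a [b [ha [hb ->]]]] := hG j k.
rewrite -[delta_mx j k]scale1r in ha.
move: ha hb => /is_dir_deriv_ftilde_delta-> /is_dir_deriv_ftilde_delta->.
rewrite /= !rmorphD !rmorphM /= !conjCK !conjC1 !conjCi.
have ii : 'i * 'i = -1 :> algC by rewrite -expr2 sqrCi.
set x := (A *m Z) j k; set y := (mxH Z *m A) k j; set m := M k k.
transitivity (2 * (x * m^* + m * y^*)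
              + ('i * 'i + 1) * (m * x^* - m * y^* - x * m^* + y * m^*)); first ring.
by rewrite ii addNr mul0r addr0.
Qed.

Lemma egrad_mulmx_diag G r : is_egrad (ftilde A) Z G ->
  (mxH G *m Z) r r = 4 * `|M r r| ^+ 2.
Proof.
move=> /egradE hG; have hM : mxH (A *m Z) *m Z = mxH M by rewrite !mxHM mxHK mulmxA.
have conjM : \sum_m ((A *m Z) m r)^* * Z m r = (M r r)^*.
  by rewrite -mxHE -hM mxE; apply: eq_bigr => m _; rewrite mxHE.
rewrite mxE; transitivity (\sum_m 2 * (M r r * (((A *m Z) m r)^* * Z m r)
                               + (M r r)^* * ((mxH Z *m A) r m * Z m r))).
  apply: eq_bigr => m _; rewrite mxHE hG /= !rmorphM !rmorphD /= !rmorphM /=.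
  by rewrite !conjCK !conjC1; ring.
have diagM : \sum_m (mxH Z *m A) r m * Z m r = M r r by rewrite [RHS]mxE.
by rewrite -mulr_sumr big_split /= -!mulr_sumr conjM diagM normCK; ring.
Qed.

End Gradient.

Lemma Re_eq0_conjN (x : algC) : x^* = - x -> 'Re x = 0.
Proof. by move=> hx; rewrite ReE hx subrr mul0r. Qed.

(* The diagonal of G^H Z is real ([egrad_mulmx_diag]) and d is imaginary. *)
Lemma rinner_egrad_diag n (A Z G : 'M[algC]_(n + n)) (d : 'rV_(n + n)) :
  is_egrad (ftilde A) Z G -> (forall r, (d 0 r)^* = - d 0 r) ->
  rinner G (Z *m diag_mx d) = 0.
Proof.
move=> hG hd; rewrite /rinner mulmxA mxtrace_mulmx_diag; apply: Re_eq0_conjN.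
rewrite rmorph_sum -sumrN; apply: eq_bigr => r _.
rewrite (egrad_mulmx_diag r hG) rmorphM /= hd geC0_conj ?mulrN //.
by rewrite mulr_ge0 ?ler0n ?exprn_ge0.
Qed.

Lemma skew_hermitian_hamiltonian_diag n (K : 'M[algC]_(n + n)) :
  skew_hermitian_hamiltonian K ->
  skew_hermitian_hamiltonian (diag_mx (\row_r K r r)).
Proof.
case/skew_hermitian_hamiltonianP => sk e1 _.
apply/skew_hermitian_hamiltonianP; split => [a b|i j|i j]; rewrite !mxE ?eq_shift.
- by rewrite eq_sym; case: eqP => [->|_]; rewrite ?mulr1n ?mulr0n ?sk ?conjC0 ?oppr0.
- by rewrite e1.
- by rewrite !mulr0n oppr0.
Qed.

Lemma tangent_proj_diag_eq0 n (A Z G K : 'M[algC]_(n + n)) :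
  mxH Z *m Z = 1%:M -> is_egrad (ftilde A) Z G ->
  skew_hermitian_hamiltonian K -> is_tangent_proj Z G (Z *m K) ->
  forall r, K r r = 0.
Proof.
move=> hZ hG hK [_ hproj].
have hKd := skew_hermitian_hamiltonian_diag hK.
have := hproj _ (ex_intro _ _ (conj hKd erefl)).
have [sk _ _] := (skew_hermitian_hamiltonianP K).1 hK.
rewrite rinnerBl (rinner_egrad_diag hG) => [|r]; last by rewrite mxE sk.
rewrite sub0r rinner_mulmxl // /rinner mxtrace_mulmx_diag.
have -> : \sum_r mxH K r r * (\row_r K r r) 0 r = \sum_r `|K r r| ^+ 2.
  by apply: eq_bigr => r _; rewrite mxHE mxE normCK mulrC.
have sq_ge0 r : 0 <= `|K r r| ^+ 2 by rewrite exprn_ge0.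
rewrite (Creal_ReP _ (ger0_real (sumr_ge0 _ (fun r _ => sq_ge0 r)))).
move=> /eqP; rewrite oppr_eq0 => /eqP /psumr_eq0P sq_eq0 r.
by apply/eqP; rewrite -normr_eq0 -sqrf_eq0 sq_eq0.
Qed.

Ltac case_nat_eqs :=
  repeat match goal with |- context [(?a == ?b)%N] =>
    case: (@eqP nat a b) => ?; try (exfalso; lia) end.

Section RotationGenerators.
Variables (n : nat) (u : algC).
Local Notation l := (lshift n).
Local Notation r := (rshift n).

Lemma rot_dot_RK1 (i : 'I_n) :
  rot_dot (RK1 i) u = - u *: delta_mx (l i) (r i) + u *: delta_mx (r i) (l i).
Proof.
apply/matrixP => a b; rewrite !mxE -!val_eqE /= /at_.
move: (ltn_ord i); move: (i : nat) (a : nat) (b : nat) => ? ? ? ?; case_nat_eqs;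
  by rewrite /= ?(mulr0, mulr1, mulNr, oppr0, addr0, add0r, subr0).
Qed.

Lemma rot_dot_RK2 (i j : 'I_n) : (i < j)%N ->
  rot_dot (RK2 i j) u =
    - u *: delta_mx (l i) (l j) - u *: delta_mx (r i) (r j)
    + u^* *: delta_mx (l j) (l i) + u^* *: delta_mx (r j) (r i).
Proof.
move=> lt_ij; apply/matrixP => a b; rewrite !mxE -!val_eqE /= /at_.
move: lt_ij (ltn_ord i) (ltn_ord j).
move: (i : nat) (j : nat) (a : nat) (b : nat) => ? ? ? ? ? ? ?; case_nat_eqs.
all: by rewrite /= ?(mulr0, mulr1, mulNr, oppr0, addr0, add0r, subr0).
Qed.

Lemma rot_dot_RK3 (i j : 'I_n) : (i < j)%N ->
  rot_dot (RK3 i j) u =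
    - u *: delta_mx (l i) (r j) - u^* *: delta_mx (l j) (r i)
    + u *: delta_mx (r i) (l j) + u^* *: delta_mx (r j) (l i).
Proof.
move=> lt_ij; apply/matrixP => a b; rewrite !mxE -!val_eqE /= /at_.
move: lt_ij (ltn_ord i) (ltn_ord j).
move: (i : nat) (j : nat) (a : nat) (b : nat) => ? ? ? ? ? ? ?; case_nat_eqs.
all: by rewrite /= ?(mulr0, mulr1, mulNr, oppr0, addr0, add0r, subr0).
Qed.

End RotationGenerators.

Definition rot_admissible n (rk : rot_kind n) (u : algC) : Prop :=
  [/\ admissible rk, `|u| = 1 & if rk is RK1 _ then u = 1 else True].

Lemma exists_phase_Re (x : algC) :
  exists2 u, `|u| = 1 & `|'Re (- 2 * (u * x^* + u^* * x))| = 4 * `|x|.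
Proof.
suff [u hu hx] : exists2 u, `|u| = 1 & u * x^* + u^* * x = 2 * `|x|.
  exists u => //; rewrite hx (Creal_ReP _ _); last first.
    by rewrite realM ?realN ?realM ?realn ?normr_real.
  by rewrite !normrM normrN !normr_nat normr_id mulrA -natrM.
have [->|x_neq0] := eqVneq x 0.
  by exists 1; rewrite ?normr1 // normr0 conjC0 !mulr0 addr0.
have nx_neq0 : `|x| != 0 by rewrite normr_eq0.
exists (x / `|x|); first by rewrite normf_div normr_id mulfV.
rewrite rmorphM fmorphV /= (conj_Creal (normr_real x)).
have xx : x * x^* = `|x| ^+ 2 by rewrite normCK.
transitivity (2 * (x * x^*) / `|x|); first by field.
by rewrite xx; field.
Qed.

Section RotationTraces.
Variables (n : nat) (K : 'M[algC]_(n + n)).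
Hypotheses (hK : skew_hermitian_hamiltonian K) (K_diag0 : forall a, K a a = 0).
Local Notation l := (lshift n).
Local Notation r := (rshift n).
Local Notation tr_rot rk u := (\tr (mxH K *m rot_dot rk u)).

Let K_skew a b : (K b a)^* = - K a b.
Proof. by case/skew_hermitian_hamiltonianP: hK. Qed.

Let K_rr i j : K (r i) (r j) = K (l i) (l j).
Proof. by case/skew_hermitian_hamiltonianP: hK. Qed.

Let K_rl i j : K (r i) (l j) = - K (l i) (r j).
Proof. by case/skew_hermitian_hamiltonianP: hK. Qed.

Lemma tr_rot_RK1 i : tr_rot (RK1 i) 1 = - 2 * K (l i) (r i).
Proof.
rewrite rot_dot_RK1 mulmxDr mxtraceD -!scalemxAr !mxtraceZ !mxtrace_mulmx_delta.
by rewrite !mxHE !K_skew K_rl; ring.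
Qed.

Lemma tr_rot_RK2 (i j : 'I_n) u : (i < j)%N ->
  let x := K (l i) (l j) in tr_rot (RK2 i j) u = - 2 * (u * x^* + u^* * x).
Proof.
move=> lt_ij x; rewrite rot_dot_RK2 // !mulmxDr !mulmxN !mxtraceD !raddfN /=.
by rewrite -!scalemxAr !mxtraceZ !mxtrace_mulmx_delta !mxHE !K_rr !K_skew /x; ring.
Qed.

Lemma tr_rot_RK3 (i j : 'I_n) u : (i < j)%N ->
  let x := K (l i) (r j) in tr_rot (RK3 i j) u = - 2 * (u * x^* + u^* * x).
Proof.
move=> lt_ij x; rewrite rot_dot_RK3 // !mulmxDr !mulmxN !mxtraceD !raddfN /=.
by rewrite -!scalemxAr !mxtraceZ !mxtrace_mulmx_delta !mxHE !K_skew !K_rl /x; ring.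
Qed.

Lemma exists_rot_upper_left (i j : 'I_n) : exists rk u,
  rot_admissible rk u /\ 2 * `|K (l i) (l j)| <= `|'Re (tr_rot rk u)|.
Proof.
wlog le_ij : i j / (i <= j)%N.
  move=> hw; case: (leqP i j) => [/hw //|/ltnW/hw].
  by rewrite -norm_conjC K_skew normrN.
move: le_ij; rewrite leq_eqVlt => /orP[/eqP/val_inj-> | lt_ij].
  exists (RK1 j), 1; split; first by rewrite /rot_admissible normr1.
  by rewrite K_diag0 normr0 mulr0.
have [u hu hRe] := exists_phase_Re (K (l i) (l j)).
exists (RK2 i j), u; split => //.
by rewrite tr_rot_RK2 // hRe ler_wpM2r // ler_nat.
Qed.

Lemma exists_rot_upper_right (i j : 'I_n) : exists rk u,
  rot_admissible rk u /\ 2 * `|K (l i) (r j)| <= `|'Re (tr_rot rk u)|.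
Proof.
wlog le_ij : i j / (i <= j)%N.
  move=> hw; case: (leqP i j) => [/hw //|/ltnW/hw].
  by rewrite -[in X in _ -> X]normrN -K_skew norm_conjC K_rl normrN.
move: le_ij; rewrite leq_eqVlt => /orP[/eqP/val_inj-> | lt_ij].
  (* Only type (R1) pivots here, and it yields 2 |x| rather than the 4 |x| of
     (R2)/(R3): this is where the constant 2 in eta comes from. *)
  exists (RK1 j), 1; split; first by rewrite /rot_admissible normr1.
  have x_real : K (l j) (r j) \is Num.real.
    by rewrite CrealE K_skew K_rl opprK.
  rewrite tr_rot_RK1 (Creal_ReP _ _); last by rewrite realM ?realN ?realn.
  by rewrite normrM normrN normr_nat.
have [u hu hRe] := exists_phase_Re (K (l i) (r j)).
exists (RK3 i j), u; split => //.
by rewrite tr_rot_RK3 // hRe ler_wpM2r // ler_nat.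
Qed.

Lemma exists_rot_for_entry a b : exists rk u,
  rot_admissible rk u /\ 2 * `|K a b| <= `|'Re (tr_rot rk u)|.
Proof.
case: (split_ordP a) => i ->; case: (split_ordP b) => j ->.
- exact: exists_rot_upper_left.
- exact: exists_rot_upper_right.
- by rewrite K_rl normrN; apply: exists_rot_upper_right.
- by rewrite K_rr; apply: exists_rot_upper_left.
Qed.

End RotationTraces.

Lemma frob_le_zero_diag m (K : 'M[algC]_m) (b : algC) :
  0 <= b -> (forall a, K a a = 0) -> (forall i j, `|K i j| <= b) ->
  frob K <= sqrtC (m%:R * (m%:R - 1)) * b.
Proof.
move=> b_ge0 K_diag0 K_le.
have row_le i : \sum_j `|K i j| ^+ 2 <= (m%:R - 1) * b ^+ 2.
  rewrite (bigD1 i) //= K_diag0 normr0 expr0n add0r.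
  apply: le_trans (ler_sum _ (fun j _ => lerXn2r 2 (normr_ge0 _) b_ge0 (K_le i j))) _.
  have m_gt0 : (0 < m)%N := leq_ltn_trans (leq0n i) (ltn_ord i).
  by rewrite sumr_const cardC1 card_ord -[_ *+ _]mulr_natl -subn1 natrB.
have sum_le : \sum_i \sum_j `|K i j| ^+ 2 <= m%:R * (m%:R - 1) * b ^+ 2.
  apply: le_trans (ler_sum _ (fun i _ => row_le i)) _.
  by rewrite sumr_const card_ord -[X in X <= _]mulr_natl mulrA.
have N_ge0 : 0 <= m%:R * (m%:R - 1) :> algC.
  by case: (m) => [|k]; rewrite ?mul0r // mulr_ge0 ?ler0n // subr_ge0 ler1n.
rewrite /frob -(sqrCK b_ge0) -sqrtCM ?nnegrE ?exprn_ge0 // ler_sqrtC //.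
  by rewrite nnegrE sumr_ge0 // => i _; rewrite sumr_ge0 // => j _; rewrite exprn_ge0.
by rewrite nnegrE mulr_ge0 ?exprn_ge0.
Qed.

Lemma eta_const_mul_le n x y : (0 < n)%N ->
  x <= sqrtC ((n + n)%:R * ((n + n)%:R - 1)) * y -> eta_const n * x <= 2 * y.
Proof.
move=> n_gt0; have -> : (n + n)%:R * ((n + n)%:R - 1) = 4 * n%:R ^+ 2 - 2 * n%:R :> algC.
  by rewrite natrD; ring.
have N_gt0 : 0 < 4 * n%:R ^+ 2 - 2 * n%:R :> algC.
  by rewrite -(natrX _ n 2) -!natrM -natrB ?ltr0n; nia.
have sqrtN_gt0 : 0 < sqrtC (4 * n%:R ^+ 2 - 2 * n%:R) :> algC by rewrite sqrtC_gt0.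
move=> /(ler_wpM2l (ltW (divr_gt0 (ltr0n _ 2) sqrtN_gt0))).
by rewrite [_ * (_ * y)]mulrA divfK ?gt_eqF.
Qed.

Theorem lemma4p3 (n : nat) (hn : (1 <= n)%N) (A : 'M[algC]_(n + n))
    (hA : hamiltonian A) (Z : 'M[algC]_(n + n)) (hZ : unitary_symplectic Z)
    (G P : 'M[algC]_(n + n)) (hG : is_egrad (ftilde A) Z G)
    (hP : is_tangent_proj Z G P) :
  exists (rk : rot_kind n) (u : algC),
    [/\ admissible rk, `|u| = 1,
        (if rk is RK1 _ then u = 1 else True) &
        eta_const n * frob P <= `|rinner P (Z *m rot_dot rk u)| ].
Proof.
have [[hZu _] [[K [hK defP]] _]] := (hZ, hP); subst P.
have K_diag0 := tangent_proj_diag_eq0 hZu hG hK hP.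
pose i0 := lshift n (Ordinal hn).
have [[a b] _ K_le] := @real_arg_maxP _ _ (i0, i0) xpredT
  (fun ab => `|K ab.1 ab.2|) isT (fun ab _ => normr_real _).
have [rk [u [[adm hu hu1] hrot]]] := exists_rot_for_entry hK K_diag0 a b.
exists rk, u; split => //.
rewrite rinner_mulmxl // frob_mulmxl //; apply: le_trans hrot.
apply: eta_const_mul_le => //.
exact: frob_le_zero_diag (normr_ge0 _) K_diag0 (fun i j => K_le (i, j) isT).
Qed.
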